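(* Let $f$ be an axis rule defined for profiles over every finite candidate set, satisfying resistance to cloning, and suppose there are constants $h^*_m,h_m>0$ ($m\ge3$) such that for every finite $C$ with $|C|=m$, $f$ restricted to profiles over $C$ is the scoring rule with $\mathrm{cost}(A,\triangleleft)=0$ if $A$ is an interval of $\triangleleft$, $\mathrm{cost}(A,\triangleleft)=h^*_m$ if $A$ is not an interval of $\triangleleft$ and contains both the leftmost and rightmost candidate of $\triangleleft$, and $\mathrm{cost}(A,\triangleleft)=h_m$ otherwise. Then $h^*_m\ge h_m$ for all $m\ge6$.
   Context: Candidates come from a fixed infinite universe. An approval ballot is a nonempty subset $A\subseteq C$; a profile over $C$ is a finite sequence of ballots. An axis is a strict linear order $\triangleleft$ on $C$. A ballot $A$ is an interval of $\triangleleft$ if for all $a,b\in A$ and every $c$ with $a\triangleleft c\triangleleft b$ we have $c\in A$. The scoring rule with cost $\mathrm{cost}$ returns $\arg\min_{\triangleleft}\sum_{A\in P}\mathrm{cost}(A,\triangleleft)$. Two candidates $a,a'$ are clones in $P$ if for every $A\in P$, $a\in A$ iff $a'\in A$. $P_{-c}$ is the profile over $C\setminus\{c\}$ obtained by removing $c$ from every ballot (ballots becoming empty are discarded); $\triangleleft_{-c}$ is the restriction of $\triangleleft$ to $C\setminus\{c\}$. Resistance to cloning: for every profile $P$ with clones $a,a'$, (1) for every $\triangleleft\in f(P)$, $\triangleleft_{-a}\in f(P_{-a})$, and (2) for every $\triangleleft^*\in f(P_{-a})$ there is $\triangleleft\in f(P)$ with $\triangleleft_{-a}=\triangleleft^*$.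 *)

From HB Require Import structures.
From mathcomp Require Import all_boot all_order all_algebra.
From mathcomp Require Import finmap.
Set Implicit Arguments. Unset Strict Implicit. Unset Printing Implicit Defensive.
Import Order.TTheory GRing.Theory Num.Theory.
Local Open Scope fset_scope.

Section Defs.
Variable U : choiceType.

Definition infinite_universe : Prop := forall s : seq U, exists x, x \notin s.

Definition ballot_over (C A : {fset U}) : bool := (A != fset0) && (A `<=` C).
Definition profile_over (C : {fset U}) (P : seq {fset U}) : bool :=
  all (ballot_over C) P.

(* An axis (strict linear order) on C, represented by the list of C's elements
   from left to right: a <| b  iff  index a ax < index b ax. *)
Definition is_axis (C : {fset U}) (ax : seq U) : Prop := uniq ax /\ ax =i C.

Definition is_interval (A : {fset U}) (ax : seq U) : bool :=
  [forall a : A, forall b : A, all (fun c =>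
     ((index (val a) ax < index c ax) && (index c ax < index (val b) ax)) ==> (c \in A)) ax].

Definition contains_ends (A : {fset U}) (ax : seq U) : bool :=
  if ax is x :: s then (x \in A) && (last x s \in A) else false.

Definition remove_cand (c : U) (P : seq {fset U}) : seq {fset U} :=
  [seq A `\ c | A <- P & A `\ c != fset0].

Definition restrict_axis (c : U) (ax : seq U) : seq U := [seq x <- ax | x != c].

Definition clones (P : seq {fset U}) (a a' : U) : Prop :=
  forall A, A \in P -> (a \in A) = (a' \in A).

Definition axis_rule (f : {fset U} -> seq {fset U} -> seq U -> Prop) : Prop :=
  forall C P, profile_over C P ->
    (forall ax, f C P ax -> is_axis C ax) /\ (exists ax, f C P ax).

Definition resistant_to_cloning (f : {fset U} -> seq {fset U} -> seq U -> Prop) : Prop :=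
  forall (C : {fset U}) (P : seq {fset U}) (a a' : U),
    profile_over C P -> a \in C -> a' \in C -> a != a' -> clones P a a' ->
    (forall ax, f C P ax -> f (C `\ a) (remove_cand a P) (restrict_axis a ax)) /\
    (forall axs, f (C `\ a) (remove_cand a P) axs ->
       exists ax, f C P ax /\ restrict_axis a ax = axs).

Local Open Scope ring_scope.

Definition cost (R : numDomainType) (hs h : R) (A : {fset U}) (ax : seq U) : R :=
  if is_interval A ax then 0
  else if contains_ends A ax then hs else h.

Definition total_cost (R : numDomainType) (hs h : R) (P : seq {fset U}) (ax : seq U) : R :=
  \sum_(A <- P) cost hs h A ax.

Definition scoring_rule (R : numDomainType) (hs h : R) (C : {fset U})
    (P : seq {fset U}) (ax : seq U) : Prop :=
  is_axis C ax /\
  forall ax', is_axis C ax' -> total_cost hs h P ax <= total_cost hs h P ax'.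

End Defs.

From HB Require Import structures.
From mathcomp Require Import all_boot all_order all_algebra.
From mathcomp Require Import finmap.
From mathcomp Require Import zify.
Import Order.TTheory GRing.Theory Num.Theory.
Set Implicit Arguments. Unset Strict Implicit. Unset Printing Implicit Defensive.
Local Open Scope fset_scope.

(* Fix six distinct candidates a, a', x, y, z, w, the rest D of C, and the profile
   P = {a,a',x}, {x,y,w}, {x,z,w}, in which a and a' are clones; deleting a leaves
   P' = {a',x}, {x,y,w}, {x,z,w} over C' = C \ {a}.  No axis makes all ballots of P'
   intervals (y and z would both lie on the side of x away from a', and the nearer one
   would split the other's interval), hence none does for P, so every axis costs at
   least min(h*, h) at both sizes m = |C| and m - 1.
   - The axis a' x y w z D of C' costs exactly h_(m-1), and every axis of C restricting
     to it still pays h_m for {x,z,w}.  If h_(m-1) <= h*_(m-1) it is optimal, so by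
     cloning resistance it lifts to an optimal axis of C, which costs at most the
     h*_m of the axis a y x w z D a'; hence h_m <= h*_m.
   - If h*_m <= h_m, then a y x w z D a' is optimal, so its restriction y x w z D a'
     is optimal for P'; it costs at least h_(m-1), the axis w z x a' D y costs
     h*_(m-1), hence h_(m-1) <= h*_(m-1).
   Together the two implications give h_m <= h*_m. *)

Section Intervals.
Variable U : choiceType.
Implicit Types (A : {fset U}) (C : {fset U}) (P : seq {fset U}) (ax s : seq U) (c : U).

Lemma intervalP A ax :
  reflect (forall u v c, u \in A -> v \in A ->
             (index u ax < index c ax < index v ax)%N -> c \in A)
          (is_interval A ax).
Proof.
apply: (iffP forallP) => [I u v c uA vA ucv | I [u uA]].
- have cax : c \in ax.
    by rewrite -index_mem; case/andP: ucv => _ /leq_trans; apply; apply: index_size.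
  have /forallP/(_ [` vA]) /allP /(_ c cax) := I [` uA].
  by rewrite /= ucv.
- apply/forallP => -[v vA]; apply/allP => c _; apply/implyP; exact: I.
Qed.

Lemma interval_gap A ax u c v : is_interval A ax -> u \in A -> v \in A -> c \notin A ->
  ~~ (index u ax < index c ax < index v ax)%N.
Proof. by move=> /intervalP I uA vA; apply: contra; apply: I. Qed.

Lemma not_interval_of_gap A ax u c v : u \in A -> v \in A -> c \notin A ->
  (index u ax < index c ax < index v ax)%N -> ~~ is_interval A ax.
Proof. by move=> uA vA cA; apply: contraL => I; apply: interval_gap I uA vA cA. Qed.

Lemma interval_cat A l1 s l2 : uniq (l1 ++ s ++ l2) -> A =i s ->
  is_interval A (l1 ++ s ++ l2).
Proof.
rewrite cat_uniq => /and3P[_ /hasPn notl1 _] As.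
apply/intervalP => u v c; rewrite !As => us vs.
have ul1 : u \notin l1 by apply: notl1; rewrite mem_cat us.
have vl1 : v \notin l1 by apply: notl1; rewrite mem_cat vs.
rewrite !index_cat (negbTE ul1) (negbTE vl1) us vs.
have := index_mem c l1; have := index_mem v s; rewrite vs.
by case: (c \in l1); case: (c \in s) => //= *; lia.
Qed.

Lemma index_filter_lt (p : pred U) s u v : p u -> p v ->
  (index u (filter p s) < index v (filter p s))%N = (index u s < index v s)%N.
Proof.
move=> pu pv; elim: s => [|t s IH] //=.
have [->|tu] := eqVneq t u; first by rewrite pu /= eqxx; case: (u == v).
have [etv|tv] := eqVneq t v; first by subst t; rewrite pv /= eqxx (negbTE tu).
by case: (p t); rewrite /= ?(negbTE tu) ?(negbTE tv) ?ltnS.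
Qed.

Lemma restrict_interval A ax c : is_interval A ax ->
  is_interval (A `\ c) (restrict_axis c ax).
Proof.
move/intervalP => I; apply/intervalP => u v d.
rewrite !in_fsetD1 => /andP[uc uA] /andP[vc vA] udv.
have : d \in restrict_axis c ax.
  by rewrite -index_mem; case/andP: udv => _ /leq_trans; apply; apply: index_size.
rewrite mem_filter => /andP[dc _].
rewrite dc (I u v) //= -(index_filter_lt (p := predC1 c) ax uc dc).
by rewrite -(index_filter_lt (p := predC1 c) ax dc vc).
Qed.

Lemma remove_cand_intervals ax c P : all (fun A => is_interval A ax) P ->
  all (fun A => is_interval A (restrict_axis c ax)) (remove_cand c P).
Proof.
move=> /allP I; apply/allP => B /mapP[A]; rewrite mem_filter => /andP[_ AP] ->.
exact/restrict_interval/I.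
Qed.

Lemma contains_ends_restrict A ax c : c \notin A -> contains_ends A ax ->
  contains_ends A (restrict_axis c ax).
Proof.
case: ax => [|u s] //= cA /andP[uA lA].
have uc : u != c by apply: contraNneq cA => <-.
rewrite /restrict_axis /= uc /= uA /=.
case/lastP: s lA => [|s v] //=; rewrite last_rcons filter_rcons => vA.
have -> : v != c by apply: contraNneq cA => <-.
by rewrite last_rcons.
Qed.

Lemma restrict_is_axis C ax c : is_axis C ax -> is_axis (C `\ c) (restrict_axis c ax).
Proof.
case=> uax axC; split; first exact: filter_uniq.
by move=> t; rewrite mem_filter in_fsetD1 axC.
Qed.

Lemma is_axis_perm s ax : uniq s -> perm_eq ax s -> is_axis [fset t in s] ax.
Proof.
move=> us axs; split; first by rewrite (perm_uniq axs).
by move=> t; rewrite (perm_mem axs) in_fset.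
Qed.

Lemma index_neq A ax p q : p \in A -> q \notin A -> p \in ax -> index p ax != index q ax.
Proof.
move=> pA qA pax; apply: contraNneq qA => epq.
have qax : q \in ax by rewrite -index_mem -epq index_mem.
by rewrite -(index_inj p pax qax epq).
Qed.

Lemma interval_opposite_sides A B ax a' x y :
  is_interval A ax -> is_interval B ax ->
  a' \in A -> x \in A -> y \notin A -> x \in B -> y \in B -> a' \notin B ->
  a' \in ax -> x \in ax ->
  (index a' ax < index x ax)%N = (index x ax < index y ax)%N.
Proof.
move=> IA IB a'A xA yA xB yB a'B a'ax xax.
have := index_neq xB a'B xax; have := index_neq a'A yA a'ax.
have := index_neq xA yA xax.
have := interval_gap IB yB xB a'B; have := interval_gap IB xB yB a'B.
have := interval_gap IA a'A xA yA; have := interval_gap IA xA a'A yA.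
move: (index a' ax) (index x ax) (index y ax) => ia ix iy.
by clear; lia.
Qed.

Lemma intervals_incompatible A1 A2 A3 ax a' x y z :
  [/\ a' \in A1, x \in A1, y \notin A1 & z \notin A1] ->
  [/\ x \in A2, y \in A2, a' \notin A2 & z \notin A2] ->
  [/\ x \in A3, z \in A3, a' \notin A3 & y \notin A3] ->
  {subset [:: a'; x; y] <= ax} ->
  ~~ [&& is_interval A1 ax, is_interval A2 ax & is_interval A3 ax].
Proof.
move=> [a'1 x1 y1 z1] [x2 y2 a'2 z2] [x3 z3 a'3 y3] sub.
apply/and3P => -[I1 I2 I3].
have a'ax : a' \in ax by apply: sub; rewrite !inE eqxx.
have xax : x \in ax by apply: sub; rewrite !inE eqxx orbT.
have yax : y \in ax by apply: sub; rewrite !inE eqxx !orbT.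
have := interval_opposite_sides I1 I2 a'1 x1 y1 x2 y2 a'2 a'ax xax.
have := interval_opposite_sides I1 I3 a'1 x1 z1 x3 z3 a'3 a'ax xax.
have := index_neq y2 z2 yax; have := index_neq x1 y1 xax; have := index_neq x1 z1 xax.
have := interval_gap I2 x2 y2 z2; have := interval_gap I2 y2 x2 z2.
have := interval_gap I3 x3 z3 y3; have := interval_gap I3 z3 x3 y3.
move: (index a' ax) (index x ax) (index y ax) (index z ax) => ia ix iy iz.
by clear; lia.
Qed.

End Intervals.

Section Costs.
Local Open Scope ring_scope.
Variables (U : choiceType) (R : realDomainType) (hs h : R).
Hypotheses (hs_ge0 : 0 <= hs) (h_ge0 : 0 <= h).
Implicit Types (A : {fset U}) (C : {fset U}) (P : seq {fset U}) (ax : seq U).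

Lemma cost_ge0 A ax : 0 <= cost hs h A ax.
Proof. by rewrite /cost; case: ifP => // _; case: ifP. Qed.

Lemma cost_le_total_cost P A ax : A \in P -> cost hs h A ax <= total_cost hs h P ax.
Proof.
move=> AP; rewrite /total_cost (big_rem A) //= lerDl.
by apply: sumr_ge0 => B _; apply: cost_ge0.
Qed.

Lemma total_cost_ge P ax c : c <= hs -> c <= h ->
  ~~ all (fun A => is_interval A ax) P -> c <= total_cost hs h P ax.
Proof.
move=> chs ch /allPn[A AP nI]; apply: le_trans (cost_le_total_cost ax AP).
by rewrite /cost (negbTE nI); case: ifP.
Qed.

Lemma scoring_rule_of_lower_bound C P ax :
  is_axis C ax -> total_cost hs h P ax <= hs -> total_cost hs h P ax <= h ->
  (forall ax', is_axis C ax' -> ~~ all (fun A => is_interval A ax') P) ->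
  scoring_rule hs h C P ax.
Proof.
move=> axC lehs leh noint; split=> // ax' /noint; exact: total_cost_ge.
Qed.

End Costs.

Section CloneArgument.
Variables (U : choiceType) (R : realFieldType).
Variables (f : {fset U} -> seq {fset U} -> seq U -> Prop) (hs h : nat -> R).
Hypothesis f_clone : resistant_to_cloning f.
Hypothesis costs_ge0 : forall m, (3 <= m)%N -> (0 <= hs m)%R /\ (0 <= h m)%R.
Hypothesis f_scoring : forall C P, (3 <= #|` C|)%N -> profile_over C P ->
  forall ax, f C P ax <-> scoring_rule (hs #|` C|) (h #|` C|) C P ax.

Variables (a a' x y z w : U) (D : seq U).
Hypothesis cands_uniq : uniq [:: a, a', x, y, z, w & D].

Local Notation C := ([fset t in [:: a, a', x, y, z, w & D]]).
Local Notation C' := ([fset t in [:: a', x, y, z, w & D]]).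
Local Notation B1 := ([fset a; a'; x]).
Local Notation B1' := ([fset a'; x]).
Local Notation B2 := ([fset x; y; w]).
Local Notation B3 := ([fset x; z; w]).
Local Notation P := ([:: B1; B2; B3]).
Local Notation P' := ([:: B1'; B2; B3]).
Local Notation t0 := [:: a, y, x, w, z & D ++ [:: a']].
Local Notation s0 := [:: y, x, w, z & D ++ [:: a']].
Local Notation s1 := [:: a', x, y, w, z & D].
Local Notation s2 := [:: w, z, x, a' & D ++ [:: y]].

Lemma cands_neq :
  ((a == a') = false) * ((a' == a) = false) * ((a == x) = false) * ((x == a) = false) *
  ((a == y) = false) * ((y == a) = false) * ((a == z) = false) * ((z == a) = false) *
  ((a == w) = false) * ((w == a) = false) * ((a' == x) = false) * ((x == a') = false) *
  ((a' == y) = false) * ((y == a') = false) * ((a' == z) = false) * ((z == a') = false) *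
  ((a' == w) = false) * ((w == a') = false) * ((x == y) = false) * ((y == x) = false) *
  ((x == z) = false) * ((z == x) = false) * ((x == w) = false) * ((w == x) = false) *
  ((y == z) = false) * ((z == y) = false) * ((y == w) = false) * ((w == y) = false) *
  ((z == w) = false) * ((w == z) = false) *
  ((a \in D) = false) * ((a' \in D) = false) * ((x \in D) = false) *
  ((y \in D) = false) * ((z \in D) = false) * ((w \in D) = false).
Proof.
move: cands_uniq => /=; rewrite !inE !negb_or -!andbA.
repeat (case/andP=> ? || move=> ?).
by repeat split; apply/negbTE; rewrite // eq_sym.
Qed.

Lemma card_C : #|` C| = (6 + size D)%N.
Proof. by rewrite card_fseq undup_id. Qed.

Lemma C_remove_a : C `\ a = C'.
Proof.
apply/fsetP => t; rewrite in_fsetD1 !in_fset !inE.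
by case: eqVneq => [->|] /=; rewrite ?cands_neq.
Qed.

Lemma profile_P : profile_over C P.
Proof.
rewrite /profile_over /= /ballot_over andbT; apply/and3P; split; apply/andP; split.
all: try by apply/fset0Pn; exists x; rewrite !inE eqxx ?orbT.
all: apply/fsubsetP => t; rewrite !inE -?orbA.
all: by (case/or3P || case/orP) => /eqP->; rewrite eqxx ?orbT.
Qed.

Lemma profile_P' : profile_over C' P'.
Proof.
rewrite /profile_over /= /ballot_over andbT; apply/and3P; split; apply/andP; split.
all: try by apply/fset0Pn; exists x; rewrite !inE eqxx ?orbT.
all: apply/fsubsetP => t; rewrite !inE -?orbA.
all: by (case/or3P || case/orP) => /eqP->; rewrite eqxx ?orbT.
Qed.

Lemma remove_cand_P : remove_cand a P = P'.
Proof.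
have x_nonempty (B : {fset U}) : x \in B -> B != fset0 by move=> xB; apply/fset0Pn; exists x.
have B1_a : B1 `\ a = B1'.
  by apply/fsetP => t; rewrite !inE; case: eqVneq => // ->; rewrite !cands_neq.
rewrite /remove_cand /= !x_nonempty /= ?B1_a ?mem_fsetD1 //.
all: by rewrite !inE ?eqxx ?cands_neq ?orbT.
Qed.

Lemma clones_P : clones P a a'.
Proof. by move=> B; rewrite !inE => /or3P[] /eqP->; rewrite !inE ?eqxx ?cands_neq. Qed.

Lemma axis_C'_not_intervals ax : is_axis C' ax ->
  ~~ all (fun A => is_interval A ax) P'.
Proof.
case=> _ axC'; rewrite /= andbT.
apply: (intervals_incompatible (a' := a') (x := x) (y := y) (z := z));
  try by split; rewrite !inE ?eqxx ?cands_neq ?orbT.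
by move=> t; rewrite axC' !inE => /or3P[] /eqP->; rewrite eqxx ?orbT.
Qed.

Lemma axis_C_not_intervals ax : is_axis C ax -> ~~ all (fun A => is_interval A ax) P.
Proof.
move=> /(restrict_is_axis a); rewrite C_remove_a => /axis_C'_not_intervals.
by rewrite -remove_cand_P; apply: contra; apply: remove_cand_intervals.
Qed.

Lemma axis_t0 : is_axis C t0.
Proof. by apply: is_axis_perm => //; apply/permP => p; rewrite /= count_cat /=; lia. Qed.

Lemma axis_s1 : is_axis C' s1.
Proof.
apply: is_axis_perm; first by case/andP: cands_uniq.
by apply/permP => p; rewrite /=; lia.
Qed.

Lemma axis_s2 : is_axis C' s2.
Proof.
apply: is_axis_perm; first by case/andP: cands_uniq.
by apply/permP => p; rewrite /= count_cat /=; lia.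
Qed.

Lemma total_cost_t0 (u v : R) : total_cost u v P t0 = u.
Proof.
have ut0 := axis_t0.1.
rewrite /total_cost !big_cons big_nil /cost.
rewrite (@interval_cat _ B2 [:: a] [:: y; x; w]) //; last by move=> t; rewrite !inE; do ![case: eqP].
rewrite (@interval_cat _ B3 [:: a; y] [:: x; w; z]) //; last by move=> t; rewrite !inE; do ![case: eqP].
rewrite (negbTE (@not_interval_of_gap _ _ _ a y a' _ _ _ _)); last 4 first.
- by rewrite !inE eqxx.
- by rewrite !inE eqxx orbT.
- by rewrite !inE !cands_neq.
- by rewrite /= !cands_neq !index_cat !cands_neq /= ?eqxx.
by rewrite /contains_ends /= last_cat /= !inE ?eqxx ?orbT /= !addr0.
Qed.

Lemma not_interval_B3_s1 : ~~ is_interval B3 s1.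
Proof.
apply: (not_interval_of_gap (u := x) (c := y) (v := z)).
all: by rewrite /= ?inE ?eqxx ?cands_neq ?orbT.
Qed.

Lemma not_ends_B3_s1 : ~~ contains_ends B3 s1.
Proof. by rewrite /contains_ends !inE !cands_neq. Qed.

Lemma total_cost_s1 (u v : R) : total_cost u v P' s1 = v.
Proof.
have us1 := axis_s1.1.
rewrite /total_cost !big_cons big_nil /cost.
rewrite (@interval_cat _ B1' [::] [:: a'; x]) //; last by move=> t; rewrite !inE; do ![case: eqP].
rewrite (@interval_cat _ B2 [:: a'] [:: x; y; w]) //; last by move=> t; rewrite !inE; do ![case: eqP].
by rewrite (negbTE not_interval_B3_s1) (negbTE not_ends_B3_s1) !add0r addr0.
Qed.

Lemma total_cost_s2 (u v : R) : total_cost u v P' s2 = u.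
Proof.
have us2 := axis_s2.1.
rewrite /total_cost !big_cons big_nil /cost.
rewrite (@interval_cat _ B1' [:: w; z] [:: x; a']) //; last by move=> t; rewrite !inE; do ![case: eqP].
rewrite (@interval_cat _ B3 [::] [:: w; z; x]) //; last by move=> t; rewrite !inE; do ![case: eqP].
rewrite (negbTE (@not_interval_of_gap _ _ _ x a' y _ _ _ _)).
- by rewrite /contains_ends /= last_cat /= !inE ?eqxx ?orbT /= !add0r addr0.
all: by rewrite /= ?inE ?eqxx ?cands_neq ?orbT //= !index_cat !cands_neq /= ?eqxx.
Qed.

Lemma cost_s0 (u v : R) : cost u v B1' s0 = v.
Proof.
rewrite /cost (negbTE (@not_interval_of_gap _ _ _ x w a' _ _ _ _)).
- by rewrite /contains_ends !inE !cands_neq.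
all: by rewrite /= ?inE ?eqxx ?cands_neq ?orbT //= !index_cat !cands_neq /= ?eqxx.
Qed.

Lemma restrict_t0 : restrict_axis a t0 = s0.
Proof.
rewrite /restrict_axis /= eqxx !cands_neq /= filter_cat /= cands_neq.
have -> // : [seq t <- D | t != a] = D.
by apply/all_filterP/allP => t tD; apply: contraTneq tD => ->; rewrite cands_neq.
Qed.

Lemma cost_B3_of_restrict (u v : R) ax : restrict_axis a ax = s1 -> cost u v B3 ax = v.
Proof.
have aB3 : a \notin B3 by rewrite !inE !cands_neq.
move=> res; rewrite /cost.
have -> : is_interval B3 ax = false.
  apply/negbTE; apply: contra not_interval_B3_s1 => I.
  by rewrite -res -(mem_fsetD1 aB3); apply: restrict_interval.
have -> // : contains_ends B3 ax = false.
by apply/negbTE; apply: contra not_ends_B3_s1 => E; rewrite -res; apply: contains_ends_restrict.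
Qed.

Local Open Scope ring_scope.

Lemma card_C_ge3 : (3 <= #|` C|)%N. Proof. by rewrite card_C. Qed.
Lemma card_C'_ge3 : (3 <= #|` C'|)%N.
Proof. by rewrite card_fseq undup_id //; case/andP: cands_uniq. Qed.

Lemma clone_resistance_a :
  (forall ax, f C P ax -> f C' P' (restrict_axis a ax)) /\
  (forall axs, f C' P' axs -> exists ax, f C P ax /\ restrict_axis a ax = axs).
Proof.
have aC : a \in C by rewrite !inE eqxx.
have a'C : a' \in C by rewrite !inE eqxx orbT.
have aa' : a != a' by rewrite cands_neq.
by rewrite -C_remove_a -remove_cand_P; apply: f_clone profile_P aC a'C aa' clones_P.
Qed.

Lemma upper_level : h #|` C'| <= hs #|` C'| -> h #|` C| <= hs #|` C|.
Proof.
move=> le_k.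
have [hs_k h_k] := costs_ge0 card_C'_ge3.
have [hs_m h_m] := costs_ge0 card_C_ge3.
have opt_s1 : f C' P' s1.
  apply/(f_scoring card_C'_ge3 profile_P'); apply: (scoring_rule_of_lower_bound hs_k h_k).
  - exact: axis_s1.
  - by rewrite total_cost_s1.
  - by rewrite total_cost_s1.
  - exact: axis_C'_not_intervals.
have [t [opt_t res_t]] := clone_resistance_a.2 s1 opt_s1.
have [_ min_t] := (f_scoring card_C_ge3 profile_P t).1 opt_t.
have := min_t t0 axis_t0; rewrite total_cost_t0; apply: le_trans.
rewrite -{1}(cost_B3_of_restrict (hs #|` C|) (h #|` C|) res_t).
by apply: cost_le_total_cost; rewrite // !in_cons eqxx !orbT.
Qed.

Lemma lower_level : hs #|` C| <= h #|` C| -> h #|` C'| <= hs #|` C'|.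
Proof.
move=> le_m.
have [hs_k h_k] := costs_ge0 card_C'_ge3.
have [hs_m h_m] := costs_ge0 card_C_ge3.
have opt_t0 : f C P t0.
  apply/(f_scoring card_C_ge3 profile_P); apply: (scoring_rule_of_lower_bound hs_m h_m).
  - exact: axis_t0.
  - by rewrite total_cost_t0.
  - by rewrite total_cost_t0.
  - exact: axis_C_not_intervals.
have := clone_resistance_a.1 t0 opt_t0; rewrite restrict_t0 => opt_s0.
have [_ min_s0] := (f_scoring card_C'_ge3 profile_P' s0).1 opt_s0.
have := min_s0 s2 axis_s2; rewrite total_cost_s2; apply: le_trans.
rewrite -{1}(cost_s0 (hs #|` C'|) (h #|` C'|)).
by apply: cost_le_total_cost; rewrite // mem_head.
Qed.

Lemma h_le_hs : h #|` C| <= hs #|` C|.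
Proof.
have [/upper_level //|lt_k] := lerP (h #|` C'|) (hs #|` C'|).
rewrite leNgt; apply: contraTN lt_k => /ltW /lower_level.
by rewrite leNgt.
Qed.

End CloneArgument.

Lemma uniq_seq_of_size (U : choiceType) : infinite_universe U ->
  forall n, exists s : seq U, uniq s /\ size s = n.
Proof.
move=> inf; elim=> [|n [s [us <-]]]; first by exists [::].
by have [t ts] := inf s; exists (t :: s); rewrite /= ts us.
Qed.

Local Open Scope ring_scope.

Theorem mainTheorem17 (U : choiceType) (R : realFieldType)
    (f : {fset U} -> seq {fset U} -> seq U -> Prop) (hs h : nat -> R) :
  infinite_universe U ->
  axis_rule f ->
  resistant_to_cloning f ->
  (forall m : nat, (3 <= m)%N -> 0 < hs m /\ 0 < h m) ->
  (forall (C : {fset U}) (P : seq {fset U}), (3 <= #|` C|)%N -> profile_over C P ->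
     forall ax, f C P ax <-> scoring_rule (hs #|` C|) (h #|` C|) C P ax) ->
  forall m : nat, (6 <= m)%N -> h m <= hs m.
Proof.
move=> inf _ clone pos scoring m.
have pos0 n : (3 <= n)%N -> 0 <= hs n /\ 0 <= h n by case/pos => /ltW ? /ltW.
have [s [cands <-]] := uniq_seq_of_size inf m.
case: s cands => [|a [|a' [|x [|y [|z [|w D]]]]]] // cands _.
by have := h_le_hs clone pos0 scoring cands; rewrite card_fseq undup_id.
Qed.
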